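(* Let $\varphi=\forall x_1\exists y_1\cdots\forall x_k\exists y_k\,P(x_1,y_1,\dots,x_k,y_k)$ be a positive Horn sentence over a finite relational signature $\sigma$, where $P$ is a conjunction of atomic $\sigma$-formulas containing no equalities. Then for every countable (finite or countably infinite) $\sigma$-structure $\mathcal{B}$ with $\mathcal{B}\models\varphi$, there is a surjective homomorphism $h:\mathcal{T}_\varphi(C_\omega)\to\mathcal{B}$ with $h(C_\omega)=B$.
   Context: Let $f_1,\dots,f_k$ be new function symbols, $f_i$ of arity $i$, and let $\mathrm{Sk}(\varphi)=\forall x_1\cdots\forall x_k\,P(x_1,f_1(x_1),\dots,x_k,f_k(x_1,\dots,x_k))$. Let $C_\omega=\{c_1,c_2,\dots\}$ be countably many new constant symbols. $T_\varphi(C_\omega)$ is the set of closed terms built from $C_\omega$ using $f_1,\dots,f_k$. The canonical model $\mathcal{T}_\varphi(C_\omega)$ is the $\sigma$-structure with domain $T_\varphi(C_\omega)$ in which $R(t_1,\dots,t_p)$ holds iff $R(t_1,\dots,t_p)$ is obtained from some atom of the matrix of $\mathrm{Sk}(\varphi)$ by substituting terms of $T_\varphi(C_\omega)$ for $x_1,\dots,x_k$ (function symbols interpreted syntactically). $C_\omega$ is viewed as a subset of $T_\varphi(C_\omega)$. *)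

From Stdlib Require List.
From mathcomp Require Import all_boot.
Set Implicit Arguments. Unset Strict Implicit. Unset Printing Implicit Defensive.

(* A finite relational signature: a finite type [Sig] of relation symbols
   with arities [ar].  A sigma-structure on a carrier [B] is an
   interpretation [relB : forall R : Sig, ('I_(ar R) -> B) -> Prop]. *)

(* Variables of the matrix P: x_1..x_k and y_1..y_k (0-indexed: Xv i = x_{i+1}). *)
Inductive var (k : nat) : Type := Xv of 'I_k | Yv of 'I_k.

Record atom (Sig : finType) (ar : Sig -> nat) (k : nat) : Type :=
  Atom { asym : Sig; aargs : 'I_(ar asym) -> var k }.

Section Sat.
Variables (Sig : finType) (ar : Sig -> nat) (k : nat) (B : Type).
Variable relB : forall R : Sig, ('I_(ar R) -> B) -> Prop.

Definition val_env (acc : seq (B * B)) (v : var k) : option B :=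
  match v with
  | Xv i => omap fst (onth acc i)
  | Yv i => omap snd (onth acc i)
  end.

Definition matrix_holds (P : seq (atom ar k)) (acc : seq (B * B)) : Prop :=
  forall a, List.In a P ->
    exists vs : 'I_(ar (asym a)) -> B,
      (forall j, val_env acc (@aargs Sig ar k a j) = Some (vs j)) /\ relB vs.

Fixpoint prefix_holds (n : nat) (Q : seq (B * B) -> Prop) (acc : seq (B * B))
  : Prop :=
  match n with
  | 0 => Q acc
  | n'.+1 => forall x : B, exists y : B, prefix_holds n' Q (rcons acc (x, y))
  end.

Definition models_phi (P : seq (atom ar k)) : Prop :=
  prefix_holds k (matrix_holds P) [::].
End Sat.

(* Closed terms T_phi(C_omega): constants c_n (n : nat) and Skolem function
   symbols f_{i+1} (i : 'I_k) of arity i+1. *)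
Inductive term (k : nat) : Type :=
  | Const : nat -> term k
  | App : forall i : 'I_k, ('I_i.+1 -> term k) -> term k.

Section TermModel.
Variables (Sig : finType) (ar : Sig -> nat) (k : nat).

(* Value of a variable in the Skolemized matrix under the substitution
   x_i := s i :  x_{i+1} |-> s i,  y_{i+1} |-> f_{i+1}(s 0, ..., s i). *)
Definition sk (s : 'I_k -> term k) (v : var k) : term k :=
  match v with
  | Xv i => s i
  | Yv i => App (fun j : 'I_i.+1 => s (widen_ord (ltn_ord i) j))
  end.

(* Relations of the canonical model T_phi(C_omega): R(t_1..t_p) holds iff it is
   a substitution instance of some atom of the matrix of Sk(phi). *)
Definition termRel (P : seq (atom ar k)) (R : Sig) (ts : 'I_(ar R) -> term k)
  : Prop :=
  exists (s : 'I_k -> term k) (a : atom ar k),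
    List.In a P /\
    existT (fun R' => 'I_(ar R') -> term k) (asym a) (fun j => sk s (@aargs Sig ar k a j))
    = existT (fun R' => 'I_(ar R') -> term k) R ts.
End TermModel.

From Stdlib Require Import ClassicalEpsilon FunctionalExtensionality.
From mathcomp Require Import all_boot.

Set Implicit Arguments.
Unset Strict Implicit.
Unset Printing Implicit Defensive.

(* Fix a winning strategy for the existential player of the game
   forall x_1 exists y_1 ... forall x_k exists y_k P in B, choosing y_{i+1}
   from the history (x_1,y_1),...,(x_i,y_i) and the new x_{i+1}.  Interpret
   f_{i+1}(x_1,...,x_{i+1}) by replaying the strategy on x_1,...,x_{i+1}, and
   c_n as the element whose code under the injection B -> nat is n.  Then a
   substitution instance of the Skolemized matrix evaluates to a play that
   follows the strategy, so its atoms hold in B; surjectivity already comes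
   from the constants. *)

Section SkolemPlay.
Variables (B : Type) (Y : seq (B * B) -> B -> B).

Definition skolem_play (xs : seq B) : seq (B * B) :=
  foldl (fun acc x => rcons acc (x, Y acc x)) [::] xs.

Lemma skolem_play_rcons xs x :
  skolem_play (rcons xs x) = rcons (skolem_play xs) (x, Y (skolem_play xs) x).
Proof. exact: foldl_rcons. Qed.

Lemma size_skolem_play xs : size (skolem_play xs) = size xs.
Proof.
by elim/last_ind: xs => [|xs x IH] //; rewrite skolem_play_rcons !size_rcons IH.
Qed.

Lemma onth_skolem_play x0 xs i : i < size xs ->
  onth (skolem_play xs) i
  = Some (nth x0 xs i, Y (skolem_play (take i xs)) (nth x0 xs i)).
Proof.
elim/last_ind: xs => [|xs x IH] //; rewrite size_rcons ltnS leq_eqVlt.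
rewrite skolem_play_rcons -!cats1 onth_cat size_skolem_play nth_cat.
case/orP=> [/eqP -> | lt_i_xs]; first by rewrite ltnn subnn take_size_cat.
by rewrite lt_i_xs IH // takel_cat // ltnW.
Qed.

Definition skolem_fun (i : nat) (v : 'I_i.+1 -> B) : B :=
  Y (skolem_play (mkseq (fun j => v (inord j)) i)) (v ord_max).

Section Winning.
Variables (k : nat) (Q : seq (B * B) -> Prop).
Hypothesis Y_wins : forall acc x,
  (exists y, prefix_holds (k - (size acc).+1) Q (rcons acc (x, y))) ->
  prefix_holds (k - (size acc).+1) Q (rcons acc (x, Y acc x)).

Lemma prefix_holds_skolem_play xs : size xs <= k ->
  prefix_holds k Q [::] -> prefix_holds (k - size xs) Q (skolem_play xs).
Proof.
move=> + phi_holds; elim/last_ind: xs => [|xs x IH]; first by rewrite subn0.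
rewrite size_rcons => lt_xs_k.
have := IH (ltnW lt_xs_k); rewrite -subnSK // => /(_ x) win_x.
rewrite skolem_play_rcons.
by have := @Y_wins (skolem_play xs) x; rewrite size_skolem_play; apply.
Qed.
End Winning.
End SkolemPlay.

Section TermEval.
Variables (k : nat) (B : Type) (c : nat -> B).
Variable F : forall i : nat, ('I_i.+1 -> B) -> B.

Fixpoint term_eval (t : term k) : B :=
  match t with
  | Const n => c n
  | App i ts => F (fun j => term_eval (ts j))
  end.
End TermEval.

Lemma val_env_skolem_play (k : nat) (B : Type) (Y : seq (B * B) -> B -> B)
    (c : nat -> B) (s : 'I_k -> term k) (v : var k) :
  let h := term_eval c (skolem_fun Y) in
  val_env (skolem_play Y [seq h (s i) | i <- enum 'I_k]) v = Some (h (sk s v)).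
Proof.
move=> h; set xs := map _ _.
have size_xs : size xs = k by rewrite size_map size_enum_ord.
have nth_xs x0 (i : 'I_k) : nth x0 xs i = h (s i).
  by rewrite (nth_map i) ?nth_ord_enum // size_enum_ord.
case: v => i /=; rewrite (onth_skolem_play _ (h (s i))) ?size_xs //= nth_xs //.
congr (Some (Y (skolem_play Y _) _)); last by congr (h (s _)); apply: val_inj.
apply: (@eq_from_nth _ (h (s i))); first by rewrite size_take size_xs ltn_ord size_mkseq.
move=> j; rewrite size_take size_xs ltn_ord => lt_j_i.
have lt_j_k : j < k by rewrite (ltn_trans lt_j_i).
rewrite nth_take // nth_mkseq // -[j]/(val (Ordinal lt_j_k)) nth_xs.
by congr (h (s _)); apply: val_inj; rewrite /= inordK // ltnW.
Qed.

Lemma termRel_hom (Sig : finType) (ar : Sig -> nat) (k : nat)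
    (P : seq (atom ar k)) (B : Type) (relB : forall R : Sig, ('I_(ar R) -> B) -> Prop)
    (h : term k -> B) :
  (forall s : 'I_k -> term k, exists acc,
     matrix_holds relB P acc /\ forall v, val_env acc v = Some (h (sk s v))) ->
  forall (R : Sig) (ts : 'I_(ar R) -> term k),
    @termRel Sig ar k P R ts -> relB R (fun j => h (ts j)).
Proof.
move=> instances R ts [s [a [Pa def_ts]]].
have [acc [Pacc val_acc]] := instances s.
have [vs [def_vs relB_vs]] := Pacc a Pa.
have def_vs' : vs = fun j => h (sk s (aargs j)).
  by apply: functional_extensionality => j; move: (def_vs j); rewrite val_acc => -[].
(* [def_ts] equates dependent pairs, so transport along it through a predicate
   on the sigma type rather than by rewriting [ts]. *)
pose relB_h (p : {R' : Sig & 'I_(ar R') -> term k}) :=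
  relB (projT1 p) (fun j => h (projT2 p j)).
have : relB_h (existT _ (asym a) (fun j => sk s (aargs j))) by move: relB_vs; rewrite def_vs'.
by rewrite def_ts.
Qed.

Theorem mainTheorem9 (Sig : finType) (ar : Sig -> nat) (k : nat)
    (P : seq (atom ar k))
    (B : Type) (relB : forall R : Sig, ('I_(ar R) -> B) -> Prop) :
  inhabited B ->
  (exists f : B -> nat, injective f) ->
  @models_phi Sig ar k B relB P ->
  exists h : term k -> B,
    (forall (R : Sig) (ts : 'I_(ar R) -> term k),
        @termRel Sig ar k P R ts -> relB R (fun j => h (ts j))) /\
    (forall b : B, exists t : term k, h t = b) /\
    (forall b : B, exists n : nat, h (Const k n) = b).
Proof.
move=> inhB [code code_inj] Bphi.
pose Q := matrix_holds relB P.
pose Y acc x :=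
  epsilon inhB (fun y => prefix_holds (k - (size acc).+1) Q (rcons acc (x, y))).
pose decode n := epsilon inhB (fun b => code b = n).
have codeK : cancel code decode.
  by move=> b; apply: code_inj; apply: (epsilon_spec inhB (fun b' => code b' = code b)); exists b.
pose h := @term_eval k B decode (skolem_fun Y).
exists h; split; last by split=> b; [exists (Const k (code b)) | exists (code b)]; apply: codeK.
apply: termRel_hom => s; pose xs := [seq h (s i) | i <- enum 'I_k].
exists (skolem_play Y xs); split; last exact: val_env_skolem_play.
have size_xs : size xs = k by rewrite size_map size_enum_ord.
have := @prefix_holds_skolem_play _ Y k Q _ xs (eq_leq size_xs) Bphi.
by rewrite size_xs subnn; apply=> acc x; apply: epsilon_spec.
Qed.
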